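(* For each of the following finite posets $\mathcal{P}$ one has $b(\mathfrak{g}^{\prec}(\mathcal{P}))=|Rel_{\overline{C}}(\mathcal{P})|$: (a) $\mathcal{P}=\mathbf{2\times n}$ for $n\ge 1$; (b) $\mathcal{P}=T_m(n)$ for $m\ge 2$, $n\ge 1$.
   Context: All Lie algebras are over an algebraically closed field $\mathbf{k}$ of characteristic zero. For a finite poset $\mathcal{P}$, write $x\prec y$ for strict relations; a strict relation $p\prec q$ is covering if there is no $z$ with $p\prec z\prec q$, and $Rel_{\overline{C}}(\mathcal{P})$ is the set of non-covering strict relations. $\mathfrak{g}^{\prec}(\mathcal{P})$ is the Lie algebra (commutator bracket) of matrices spanned by matrix units $E_{p,q}$ with $p\prec q$. The breadth is $b(L)=\max_{x\in L}\operatorname{rank}(\mathrm{ad}_x)$. $\mathbf{2\times n}$ is the poset on $\{i_j : 1\le i\le n,\ 1\le j\le 2\}$ with $i_j\preceq i'_{j'}$ iff $i\le i'$ and $j\le j'$. $T_m(n)$ is the rooted complete $m$-ary tree of depth $n$: the poset on $\{i_k : 1\le k\le n,\ 1\le i\le m^{k-1}\}$ whose covering relations are $i_k\prec j_{k+1}$ for $1\le k<n$, $1\le i\le m^{k-1}$, $m(i-1)+1\le j\le mi$, with the order the transitive closure of these. *)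

From HB Require Import structures.
From mathcomp Require Import all_boot all_order all_algebra.
Set Implicit Arguments. Unset Strict Implicit. Unset Printing Implicit Defensive.
Import GRing.Theory.
Local Open Scope ring_scope.

(* A finite poset is given by a finType T and its strict order relation lt
   (x < y).  Matrices indexed by T are realised as 'M[F]_#|T| via enum_rank. *)

(* g^<(P): span of the matrix units E_{p,q} with p < q, as a subspace of the
   (associative) matrix algebra; the Lie bracket is the commutator. *)
Definition gprec (F : fieldType) (T : finType) (lt : rel T) : {vspace 'M[F]_#|T|} :=
  (<<[seq delta_mx (enum_rank pq.1) (enum_rank pq.2)
      | pq <- enum [pred pq : T * T | lt pq.1 pq.2]]>>)%VS.

Definition ad_rank (F : fieldType) (T : finType) (lt : rel T)
    (x : 'M[F]_#|T|) : nat :=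
  \dim (linfun (fun y : 'M[F]_#|T| => x *m y - y *m x) @: gprec F lt)%VS.

Definition breadth_is (F : fieldType) (T : finType) (lt : rel T) (b : nat) : Prop :=
  (exists2 x, x \in gprec F lt & ad_rank lt x = b) /\
  (forall x, x \in gprec F lt -> (ad_rank lt x <= b)%N).

Definition noncover_rels (T : finType) (lt : rel T) : {set T * T} :=
  [set pq : T * T | lt pq.1 pq.2 && [exists z, lt pq.1 z && lt z pq.2]].

(* The poset 2 x n: elements (i, j) with i : 'I_n, j : 'I_2 (0-based),
   (i,j) <= (i',j') iff i <= i' and j <= j'. Strict order: *)
Definition two_lt (n : nat) (a b : 'I_n * 'I_2) : bool :=
  [&& a != b, (a.1 <= b.1)%N & (a.2 <= b.2)%N].

(* The rooted complete m-ary tree T_m(n): level k (0-based, k < n) has m^k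
   nodes (0-based index i < m^k). Covering relations: (k, i) < (k+1, j) with
   m*i <= j <= m*i + m - 1, i.e. j %/ m = i (0-based form of
   m(i-1)+1 <= j <= m i). *)
Definition tree_node (m n : nat) : finType := {k : 'I_n & 'I_(m ^ k)}.

Definition tree_cover (m n : nat) : rel (tree_node m n) :=
  fun a b => (((tag b : nat) == (tag a).+1) && ((tagged b : nat) %/ m == tagged a))%N.

Definition tree_lt (m n : nat) : rel (tree_node m n) :=
  fun a b => (a != b) && connect (@tree_cover m n) a b.

From HB Require Import structures.
From mathcomp Require Import all_boot all_order all_algebra zify.
Set Implicit Arguments. Unset Strict Implicit. Unset Printing Implicit Defensive.
Import GRing.Theory.
Local Open Scope ring_scope.

(* Upper bound: an entry (a,b) of a product x y with x, y in g^<(P) can only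
   be nonzero through some z with a < z < b, so every commutator [x,y] is
   supported on the non-covering relations; hence rank(ad_x) <= |Rel_C(P)|.

   Lower bound: choose a relation c contained in the order and put
   x = sum_{c a b} E_{a,b}.  Then [x, E_{u,q}] = sum_{c a u} E_{a,q} -
   sum_{c q b} E_{u,b}.  If every non-covering p < q factors as c p u, u < q,
   with p the unique c-predecessor of u, then E_{p,q} = [x, E_{u,q}] +
   sum_{c q b} E_{u,b}, where each (u,b) is again non-covering with b strictly
   above q; induction on the number of elements above q puts every
   non-covering E_{p,q} in the image of ad_x.  This general criterion
   ([breadth_noncover]) is then checked for 2 x n (c = successor in the same
   column) and for T_m(n) (c = covering relation of the tree). *)

Section PosetLieAlgebra.
Variables (F : fieldType) (T : finType).
Local Notation M := 'M[F]_#|T|.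
Local Notation r := enum_rank.

Definition matunit (pq : T * T) : M := delta_mx (r pq.1) (r pq.2).

Lemma matunitE pq a b : matunit pq (r a) (r b) = ((a == pq.1) && (b == pq.2))%:R.
Proof. by rewrite /matunit mxE !(inj_eq enum_rank_inj). Qed.

Lemma matrix_enumP (A B : M) : (forall a b, A (r a) (r b) = B (r a) (r b)) -> A = B.
Proof. by move=> eqAB; apply/matrixP => i j; rewrite -(enum_valK i) -(enum_valK j). Qed.

Lemma mem_span_matunits (s : seq (T * T)) (A : M) :
  A \in <<map matunit s>>%VS <-> (forall a b, A (r a) (r b) != 0 -> (a, b) \in s).
Proof.
split=> [|supp].
  move=> /(@coord_span _ _ _ (in_tuple (map matunit s))) -> a b.
  apply: contraNT => ab_notin; rewrite summxE big1 // => i _; rewrite mxE.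
  have /mapP[pq pq_in ->] : (map matunit s)`_i \in map matunit s.
    by apply: mem_nth; rewrite -[X in (_ < X)%N](size_tuple (in_tuple _)).
  rewrite matunitE; case: eqP => [ea|]; last by rewrite mulr0.
  case: eqP => [eb|]; last by rewrite mulr0.
  by move: ab_notin; rewrite ea eb -surjective_pairing pq_in.
rewrite [A]matrix_sum_delta; apply: memv_suml => i _; apply: memv_suml => j _.
have [->|nz] := eqVneq (A i j) 0; first by rewrite scale0r mem0v.
apply/memvZ/memv_span/mapP; exists (enum_val i, enum_val j).
  by apply: supp; rewrite !enum_valK.
by rewrite /matunit /= !enum_valK.
Qed.

Lemma dim_span_matunits (s : seq (T * T)) : uniq s -> \dim <<map matunit s>> = size s.
Proof.
move=> s_uniq; suff /eqP -> : free (map matunit s) by rewrite size_map.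
elim: s s_uniq => [|pq s IH] /=; first by rewrite /free span_nil dimv0.
case/andP=> pq_notin s_uniq; rewrite free_cons IH // andbT.
apply/negP => /mem_span_matunits /(_ pq.1 pq.2).
by rewrite matunitE !eqxx oner_eq0 -surjective_pairing (negbTE pq_notin) => /(_ isT).
Qed.

Lemma mulmx_entry_neq0 (x y : M) a b : (x *m y) (r a) (r b) != 0 ->
  exists z, x (r a) (r z) != 0 /\ y (r z) (r b) != 0.
Proof.
move=> nz; have [/existsP [z /andP [xz zy]] | /existsPn no_z] :=
  boolP [exists z, (x (r a) (r z) != 0) && (y (r z) (r b) != 0)]; first by exists z.
move: nz; rewrite mxE big1 ?eqxx // => i _.
have := no_z (enum_val i); rewrite enum_valK negb_and !negbK.
by case/orP => /eqP ->; rewrite ?mul0r ?mulr0.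
Qed.

Definition ad (x y : M) : M := x *m y - y *m x.

Lemma ad_is_linear x : linear (ad x).
Proof.
move=> a y z; rewrite /ad mulmxDr mulmxDl -scalemxAr -scalemxAl scalerBr opprD.
by rewrite addrACA.
Qed.
HB.instance Definition _ x := GRing.isLinear.Build F M M _ (ad x) (ad_is_linear x).

Lemma ad_linfunE x y : linfun (fun y : M => x *m y - y *m x) y = ad x y.
Proof. exact: (lfunE (ad x)). Qed.

Variable lt : rel T.
Hypothesis lt_irr : irreflexive lt.
Hypothesis lt_trans : transitive lt.

Local Notation I x := (linfun (fun y : M => x *m y - y *m x) @: gprec F lt)%VS.

Lemma mem_gprec (A : M) :
  A \in gprec F lt <-> (forall a b, A (r a) (r b) != 0 -> lt a b).
Proof.
by rewrite mem_span_matunits; split=> supp a b /supp; rewrite mem_enum.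
Qed.

Lemma matunit_gprec a b : lt a b -> matunit (a, b) \in gprec F lt.
Proof.
move=> ltab; apply/mem_gprec => a' b'; rewrite matunitE /=.
by case: (a' =P a) => [->|_]; case: (b' =P b) => [->|_]; rewrite ?eqxx ?andbF.
Qed.

Lemma noncover_through a z b : lt a z -> lt z b -> (a, b) \in noncover_rels lt.
Proof.
move=> ltaz ltzb; rewrite inE /= (lt_trans ltaz ltzb).
by apply/existsP; exists z; rewrite ltaz.
Qed.

Definition noncover_span : {vspace M} :=
  <<map matunit (enum (noncover_rels lt))>>%VS.

Lemma dim_noncover_span : \dim noncover_span = #|noncover_rels lt|.
Proof. by rewrite dim_span_matunits ?enum_uniq // cardE. Qed.

Lemma mulmx_gprec_noncover (x y : M) a b : x \in gprec F lt -> y \in gprec F lt ->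
  (x *m y) (r a) (r b) != 0 -> (a, b) \in noncover_rels lt.
Proof.
move=> /mem_gprec x_supp /mem_gprec y_supp /mulmx_entry_neq0 [z [/x_supp ltaz /y_supp ltzb]].
exact: noncover_through ltaz ltzb.
Qed.

Lemma ad_image_sub x : x \in gprec F lt -> (I x <= noncover_span)%VS.
Proof.
move=> xg; apply/subvP => _ /memv_imgP [y yg ->].
rewrite ad_linfunE mem_span_matunits => a b; rewrite mem_enum /ad mxE [X in _ + X]mxE.
have [xy0|xy_nz _] := eqVneq ((x *m y) (r a) (r b)) 0; first last.
  exact: mulmx_gprec_noncover xy_nz.
have [yx0|yx_nz _] := eqVneq ((y *m x) (r a) (r b)) 0; first last.
  exact: mulmx_gprec_noncover yx_nz.
by rewrite xy0 yx0 subrr eqxx.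
Qed.

Lemma ad_rank_le x : x \in gprec F lt -> (ad_rank lt x <= #|noncover_rels lt|)%N.
Proof. by move=> xg; rewrite /ad_rank -dim_noncover_span dimvS ?ad_image_sub. Qed.

Variable c : rel T.
Hypothesis c_sub : subrel c lt.
Hypothesis c_lift : forall p q, (p, q) \in noncover_rels lt ->
  exists u, [/\ c p u, lt u q & forall a, c a u -> a = p].

Definition relmx : M := \matrix_(i, j) (c (enum_val i) (enum_val j))%:R.

Lemma relmxE a b : relmx (r a) (r b) = (c a b)%:R.
Proof. by rewrite mxE !enum_rankK. Qed.

Lemma relmx_gprec : relmx \in gprec F lt.
Proof.
apply/mem_gprec => a b; rewrite relmxE.
by case cab: (c a b); rewrite ?eqxx // => _; apply: c_sub.
Qed.

Lemma mulmx_relmx_matunit u q : relmx *m matunit (u, q) = \sum_(a | c a u) matunit (a, q).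
Proof.
apply/matrix_enumP => a b; rewrite [LHS]mxE summxE (bigD1 (r u)) //= big1 => [|k k_neq].
  rewrite addr0 relmxE matunitE !eqxx /= big_mkcond (bigD1 a) //= big1 => [|a' a'_neq].
    by rewrite addr0 matunitE eqxx /=; case: (c a u); rewrite ?mul1r ?mul0r.
  by case: ifP => //; rewrite matunitE [a == _]eq_sym (negbTE a'_neq).
rewrite -(enum_valK k) matunitE; case: (enum_val k =P u) => [ku|_]; last by rewrite mulr0.
by rewrite -ku enum_valK eqxx in k_neq.
Qed.

Lemma mulmx_matunit_relmx u q : matunit (u, q) *m relmx = \sum_(b | c q b) matunit (u, b).
Proof.
apply/matrix_enumP => a b; rewrite [LHS]mxE summxE (bigD1 (r q)) //= big1 => [|k k_neq].
  rewrite addr0 relmxE matunitE !eqxx andbT /= big_mkcond (bigD1 b) //= big1 => [|b' b'_neq].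
    by rewrite addr0 matunitE !eqxx andbT; case: (c q b); rewrite ?mulr1 ?mulr0.
  by case: ifP => //; rewrite matunitE [b == _]eq_sym (negbTE b'_neq) andbF.
rewrite -(enum_valK k) matunitE; case: (enum_val k =P q) => [kq|_]; last by rewrite andbF mul0r.
by rewrite -kq enum_valK eqxx in k_neq.
Qed.

Lemma matunit_ad_relmx p u q : c p u -> (forall a, c a u -> a = p) ->
  matunit (p, q) = ad relmx (matunit (u, q)) + \sum_(b | c q b) matunit (u, b).
Proof.
move=> cpu pred_u; rewrite /ad mulmx_relmx_matunit mulmx_matunit_relmx subrK.
by rewrite (big_pred1 p) // => a; apply/idP/eqP => [/pred_u|->].
Qed.

Definition above q : {set T} := [set b | lt q b].

Lemma card_above_lt q b : lt q b -> (#|above b| < #|above q|)%N.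
Proof.
move=> ltqb; apply/proper_card/properP; split.
  by apply/subsetP => d; rewrite !inE => /(lt_trans ltqb).
by exists b; rewrite !inE ?lt_irr.
Qed.

Lemma noncover_in_ad_image p q :
  (p, q) \in noncover_rels lt -> matunit (p, q) \in I relmx.
Proof.
move: {2}#|above q| (erefl #|above q|) => k; elim/ltn_ind: k p q => k IH p q size_q pq.
have [u [cpu ltuq pred_u]] := c_lift pq.
rewrite (matunit_ad_relmx q cpu pred_u); apply: memvD.
  by apply/memv_imgP; exists (matunit (u, q)); rewrite ?ad_linfunE ?matunit_gprec.
apply: memv_suml => b cqb; have ltqb := c_sub cqb.
by apply: (IH #|above b|); rewrite -?size_q ?card_above_lt ?(noncover_through ltuq).
Qed.

Theorem breadth_noncover : breadth_is F lt #|noncover_rels lt|.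
Proof.
split; last exact: ad_rank_le.
exists relmx; first exact: relmx_gprec.
apply/eqP; rewrite eqn_leq ad_rank_le ?relmx_gprec //= /ad_rank -dim_noncover_span.
apply/dimvS/span_subvP => _ /mapP [[p q] pq ->]; rewrite mem_enum in pq.
exact: noncover_in_ad_image.
Qed.

End PosetLieAlgebra.

Section TwoByN.
Variable n : nat.
Local Notation T := ('I_n * 'I_2)%type.

Lemma pair_eqE (a b : T) : (a == b) = ((a.1 : nat) == b.1) && ((a.2 : nat) == b.2).
Proof. by case: a b => [a1 a2] [b1 b2]. Qed.

Lemma two_ltE (a b : T) : two_lt a b =
  [&& ((a.1 : nat) != b.1) || ((a.2 : nat) != b.2), (a.1 <= b.1)%N & (a.2 <= b.2)%N].
Proof. by rewrite /two_lt pair_eqE negb_and. Qed.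

Lemma two_lt_irr : irreflexive (@two_lt n).
Proof. by move=> a; rewrite /two_lt eqxx. Qed.

Lemma two_lt_trans : transitive (@two_lt n).
Proof.
move=> b a d; rewrite !two_ltE.
by have := ltn_ord a.2; have := ltn_ord b.2; have := ltn_ord d.2; lia.
Qed.

Definition two_step (a b : T) : bool := ((a.2 : nat) == b.2) && ((b.1 : nat) == (a.1).+1).

Lemma two_step_lt : subrel two_step (@two_lt n).
Proof. by move=> a b; rewrite /two_step two_ltE; lia. Qed.

Lemma two_noncover (p q : T) : (p, q) \in noncover_rels (@two_lt n) ->
  [/\ (p.1 < q.1)%N, (p.2 <= q.2)%N & ((p.2 : nat) = q.2 -> (p.1.+1 < q.1)%N)].
Proof.
rewrite inE /= => /andP [_ /existsP [z /andP [ltpz ltzq]]].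
move: ltpz ltzq; rewrite !two_ltE.
by have := ltn_ord p.2; have := ltn_ord q.2; have := ltn_ord z.2; split; lia.
Qed.

Lemma two_step_lift (p q : T) : (p, q) \in noncover_rels (@two_lt n) ->
  exists u, [/\ two_step p u, two_lt u q & forall a, two_step a u -> a = p].
Proof.
case/two_noncover => lt1 le2 eq2.
have u1 : (p.1.+1 < n)%N by have := ltn_ord q.1; lia.
exists (Ordinal u1, p.2); split; first by rewrite /two_step /= !eqxx.
  by rewrite two_ltE /=; lia.
by move=> a; rewrite /two_step /= => step_a; apply/eqP; rewrite pair_eqE; lia.
Qed.

End TwoByN.

Section Tree.
Variables m n : nat.
Local Notation T := (tree_node m n).
Local Notation cover := (@tree_cover m n).
Local Notation lt := (@tree_lt m n).

Lemma tree_node_inj (a b : T) :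
  (tag a : nat) = tag b -> (tagged a : nat) = tagged b -> a = b.
Proof.
case: a b => [k i] [k' i'] /= /val_inj ek; subst k' => ei.
by congr existT; apply: val_inj.
Qed.

Lemma cover_level (a b : T) : cover a b -> (tag b : nat) = (tag a).+1.
Proof. by case/andP => /eqP. Qed.

Lemma path_level (a : T) s : path cover a s -> (tag (last a s) : nat) = (tag a + size s)%N.
Proof.
elim: s a => [|b s IH] a /=; first by rewrite addn0.
by case/andP => /cover_level step /IH ->; rewrite step addSn addnS.
Qed.

Lemma tree_lt_level (a b : T) : lt a b -> (tag a < tag b)%N.
Proof.
case/andP => a_neq_b /connectP [[|c s] pth b_last]; first by rewrite b_last eqxx in a_neq_b.
by rewrite b_last (path_level pth) addnS ltnS leq_addr.
Qed.

Lemma tree_lt_irr : irreflexive lt.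
Proof. by move=> a; rewrite /tree_lt eqxx. Qed.

Lemma tree_lt_trans : transitive lt.
Proof.
move=> b a d ltab ltbd; have := tree_lt_level ltab; have := tree_lt_level ltbd.
case/andP: ltab => _ cab; case/andP: ltbd => _ cbd.
rewrite /tree_lt (connect_trans cab cbd) andbT.
by case: eqP => [->|] //; lia.
Qed.

Lemma cover_lt : subrel cover lt.
Proof.
move=> a b cab; rewrite /tree_lt connect1 // andbT.
by apply/eqP => ab; have := cover_level cab; rewrite ab; lia.
Qed.

(* A node of the tree has a unique parent; split off the first covering step. *)
Lemma tree_cover_lift (p q : T) : (p, q) \in noncover_rels lt ->
  exists u, [/\ cover p u, lt u q & forall a, cover a u -> a = p].
Proof.
rewrite inE /= => /andP [/andP [_ /connectP [s pth q_last]] /existsP [z /andP [ltpz ltzq]]].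
have := tree_lt_level ltpz; have := tree_lt_level ltzq.
case: s pth q_last => [_ -> /= |u s /= /andP [cpu pth] q_last]; first lia.
have u_level := cover_level cpu; move=> lev_zq lev_pz.
exists u; split=> //.
  apply/andP; split; last by apply/connectP; exists s.
  apply/eqP => uq; move: lev_zq lev_pz; rewrite -uq u_level ltnS => le_zp.
  by rewrite ltnNge le_zp.
move=> a cau; apply: tree_node_inj; first by have := cover_level cau; lia.
by case/andP: cau => _ /eqP <-; case/andP: cpu => _ /eqP <-.
Qed.

End Tree.

Theorem lemma1 (F : closedFieldType) (hF : [pchar F]%R =i pred0) :
  (forall n : nat, (1 <= n)%N ->
     breadth_is F (@two_lt n) #|noncover_rels (@two_lt n)|) /\
  (forall m n : nat, (2 <= m)%N -> (1 <= n)%N ->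
     breadth_is F (@tree_lt m n) #|noncover_rels (@tree_lt m n)|).
Proof.
(* The argument works over any field. *)
split=> [n _ | m n _ _].
  apply: (breadth_noncover F (@two_lt_irr n) (@two_lt_trans n) (@two_step_lt n)).
  exact: two_step_lift.
apply: (breadth_noncover F (@tree_lt_irr m n) (@tree_lt_trans m n) (@cover_lt m n)).
exact: tree_cover_lift.
Qed.
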